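(* Consider a $K$-armed bandit with mean reward vector $\mathbf r$ and optimal arm $a^*=\arg\max_a r(a)$, and let $\boldsymbol\theta_t$ be the iterates of LB-SGB (defined in the context) with barrier parameter $\eta>0$. Then for every $t$, $$\pi_{\boldsymbol\theta_t}(a^* )\ge\Big(\frac1K\big(1-\eta\|\nabla\Phi_\eta(\boldsymbol\theta_t)\|_2\big)\Big)^+ ,$$ where $(x)^+=\max\{0,x\}$.
   Context: Softmax policy $\pi_{\boldsymbol\theta}(a)=e^{\theta(a)}/\sum_be^{\theta(b)}$; $\Phi_\eta(\boldsymbol\theta)=\pi_{\boldsymbol\theta}^\top\mathbf r+\frac1\eta\sum_a\log\pi_{\boldsymbol\theta}(a)$. LB-SGB with step size $\alpha$: start from $\boldsymbol\theta=\mathbf 0$; at round $t$ sample $a_t\sim\pi_{\boldsymbol\theta_t}$, observe a reward $R_t(a_t)$ (random with mean $r(a_t)$), set $\hat r_t(a)=\mathbb I\{a_t=a\}R_t(a_t)/\pi_{\boldsymbol\theta_t}(a)$ and update $\boldsymbol\theta_{t+1}=\boldsymbol\theta_t+\alpha\big[(\mathrm{diag}(\pi_{\boldsymbol\theta_t})-\pi_{\boldsymbol\theta_t}\pi_{\boldsymbol\theta_t}^\top)\hat{\mathbf r}_t+\frac1\eta(\mathbf 1-K\pi_{\boldsymbol\theta_t})\big]$. *)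

From HB Require Import structures.
From mathcomp Require Import all_boot all_order all_algebra.
From mathcomp Require Import all_classical all_reals all_analysis.
Set Implicit Arguments. Unset Strict Implicit. Unset Printing Implicit Defensive.
Import Order.TTheory GRing.Theory Num.Theory.
Import numFieldNormedType.Exports.
Local Open Scope ring_scope.

Section LBSGB.
Variables (R : realType) (K : nat).

Definition softmax (th : 'I_K -> R) (a : 'I_K) : R :=
  expR (th a) / \sum_(b < K) expR (th b).

Definition Phi (eta : R) (r : 'I_K -> R) (th : 'I_K -> R) : R :=
  \sum_(a < K) softmax th a * r a + eta^-1 * \sum_(a < K) ln (softmax th a).

Definition shift (th : 'I_K -> R) (a : 'I_K) (h : R) : 'I_K -> R :=
  fun b => th b + (if b == a then h else 0).

Definition gradPhi (eta : R) (r : 'I_K -> R) (th : 'I_K -> R) (a : 'I_K) : R :=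
  derive1 (fun h : R => Phi eta r (shift th a h)) 0.

Definition norm2 (v : 'I_K -> R) : R := Num.sqrt (\sum_(a < K) v a ^+ 2).

Definition lbsgb_step (alpha eta : R) (act : 'I_K) (Rt : R)
  (th : 'I_K -> R) : 'I_K -> R :=
  let p := softmax th in
  let rhat := fun a => (if a == act then Rt else 0) / p a in
  fun a => th a + alpha * (p a * rhat a - p a * (\sum_(b < K) p b * rhat b)
                           + eta^-1 * (1 - K%:R * p a)).

(* LB-SGB iterates theta_t starting from theta_0 = 0, along a sample path
   (A t = sampled arm at round t, Rew t = observed reward R_t(A t)) *)
Fixpoint lbsgb (alpha eta : R) (A : nat -> 'I_K) (Rew : nat -> R) (t : nat)
  : 'I_K -> R :=
  match t with
  | 0 => fun _ => 0
  | t'.+1 => lbsgb_step alpha eta (A t') (Rew t') (lbsgb alpha eta A Rew t')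
  end.

End LBSGB.

From Pilot Require Import Defs.
From HB Require Import structures.
From mathcomp Require Import all_boot all_order all_algebra.
From mathcomp Require Import all_classical all_reals all_analysis.
From mathcomp Require Import ring lra.
Import Order.TTheory GRing.Theory Num.Theory.
Local Open Scope ring_scope.

(* At an optimal arm b the partial derivative of the log-barrier objective is
   dPhi/dtheta(b) = pi(b) (r(b) - pi^T r) + (1 - K pi(b)) / eta,
   whose first term is nonnegative because r(b) dominates the average reward
   pi^T r.  Hence (1 - K pi(b)) / eta <= dPhi/dtheta(b) <= ||grad Phi||, and
   rearranging gives the bound.  It holds at every parameter theta, in
   particular at every LB-SGB iterate. *)

Section Softmax.
Variables (R : realType) (K : nat).
Implicit Types (th : 'I_K -> R) (a b : 'I_K).

Lemma sum_expR_gt0 th a : 0 < \sum_(b < K) expR (th b).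
Proof.
rewrite (bigD1 a) //= ltr_pwDl ?expR_gt0 //.
by apply: sumr_ge0 => b _; exact: expR_ge0.
Qed.

Lemma softmax_gt0 th a : 0 < softmax th a.
Proof. by rewrite divr_gt0 ?expR_gt0 ?(sum_expR_gt0 th a). Qed.

Lemma sum_softmax th a : \sum_(b < K) softmax th b = 1.
Proof. by rewrite -mulr_suml divff // gt_eqF ?(sum_expR_gt0 th a). Qed.

Lemma sum_mul_eq_natr (F : 'I_K -> R) a : \sum_(b < K) F b * (b == a)%:R = F a.
Proof.
rewrite (bigD1 a) //= eqxx mulr1 big1 ?addr0 // => b /negbTE ->.
by rewrite mulr0.
Qed.

(* Qualified: mathcomp-analysis also defines [shift]. *)
Lemma shift0 th a : Defs.shift th a 0 = th.
Proof. by apply/funext => b; rewrite /Defs.shift; case: ifP; rewrite addr0. Qed.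

Lemma is_derive_expR_shift th a b (x : R) :
  is_derive x 1 (fun h => expR (Defs.shift th a h b)) (expR (Defs.shift th a x b) * (b == a)%:R).
Proof.
by apply: is_derive1_comp; rewrite /Defs.shift; case: eqP => _;
  apply: is_derive_eq; rewrite ?add0r ?mulr1.
Qed.

Lemma is_derive_softmax_shift th a b :
  is_derive (0 : R) 1 (fun h => softmax (Defs.shift th a h) b)
    (softmax th b * ((b == a)%:R - softmax th a)).
Proof.
have Z_gt0 := sum_expR_gt0 th a.
have dZ : is_derive (0 : R) 1 (fun h => \sum_(c < K) expR (Defs.shift th a h c)) (expR (th a)).
  have := is_derive_sum (fun c => is_derive_expR_shift th a c 0).
  by rewrite fct_sumE sum_mul_eq_natr shift0.
have Z_neq0 : \sum_(c < K) expR (Defs.shift th a 0 c) != 0 by rewrite shift0 gt_eqF.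
apply: (is_derive_eq (is_deriveM (is_derive_expR_shift th a b 0) (is_deriveV Z_neq0 dZ))).
rewrite !shift0 /softmax; set Z := \sum_(c < K) _ in Z_gt0 *.
by case: eqP => _; rewrite /GRing.scale /=; field; rewrite gt_eqF.
Qed.

Lemma gradPhiE eta r th a :
  gradPhi eta r th a = softmax th a * (r a - \sum_(b < K) softmax th b * r b)
                       + eta^-1 * (1 - K%:R * softmax th a).
Proof.
pose dsoftmax b := softmax th b * ((b == a)%:R - softmax th a).
have dmean : is_derive (0 : R) 1 (fun h => \sum_(b < K) softmax (Defs.shift th a h) b * r b)
    (\sum_(b < K) dsoftmax b * r b).
  have := is_derive_sum (fun b =>
    is_deriveM (is_derive_softmax_shift th a b) (is_derive_cst (r b) (0 : R) 1)).
  rewrite fct_sumE => /is_derive_eq; apply; apply: eq_bigr => b _.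
  by rewrite scaler0 add0r /GRing.scale /= mulrC.
have dlog : is_derive (0 : R) 1 (fun h => \sum_(b < K) ln (softmax (Defs.shift th a h) b))
    (\sum_(b < K) ((b == a)%:R - softmax th a)).
  have := is_derive_sum (fun b =>
    is_derive1_comp (f := @ln R) (g := fun h => softmax (Defs.shift th a h) b)
                    (is_derive1_ln (softmax_gt0 (Defs.shift th a 0) b))
                    (is_derive_softmax_shift th a b)).
  rewrite fct_sumE => /is_derive_eq; apply; apply: eq_bigr => b _.
  by rewrite shift0 mulrA mulVf ?mul1r // lt0r_neq0 // softmax_gt0.
rewrite /gradPhi derive1E; apply: derive_val.
apply: (is_derive_eq (is_deriveD dmean (is_deriveZ eta^-1 dlog))); congr (_ + _).
  transitivity (\sum_(b < K) softmax th b * r b * (b == a)%:R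
                - softmax th a * \sum_(b < K) softmax th b * r b).
    by rewrite mulr_sumr -sumrB; apply: eq_bigr => b _; rewrite /dsoftmax; ring.
  by rewrite sum_mul_eq_natr mulrBr.
have sum_delta : \sum_(b < K) (b == a)%:R = 1 :> R.
  by rewrite -[RHS](sum_mul_eq_natr (fun=> 1) a); apply: eq_bigr => b _; rewrite mul1r.
by rewrite sumrB sum_delta sumr_const card_ord mulr_natl.
Qed.

Lemma gradPhi_argmax_ge eta r th a : (forall b, r b <= r a) ->
  eta^-1 * (1 - K%:R * softmax th a) <= gradPhi eta r th a.
Proof.
move=> r_le; rewrite gradPhiE lerDr mulr_ge0 ?(ltW (softmax_gt0 th a)) //.
rewrite subr_ge0 -[leRHS]mulr1 -(sum_softmax th a) mulr_sumr.
by apply: ler_sum => b _; rewrite [leRHS]mulrC ler_wpM2l ?(ltW (softmax_gt0 th b)).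
Qed.

Lemma coord_le_norm2 (v : 'I_K -> R) a : v a <= norm2 v.
Proof.
rewrite (le_trans (ler_norm _)) // -sqrtr_sqr ler_wsqrtr //.
by rewrite (bigD1 a) //= lerDl; apply: sumr_ge0 => b _; exact: sqr_ge0.
Qed.

Lemma softmax_argmax_ge eta r th a : 0 < eta -> (forall b, r b <= r a) ->
  Num.max 0 (K%:R^-1 * (1 - eta * norm2 (gradPhi eta r th))) <= softmax th a.
Proof.
move=> eta_gt0 r_le; rewrite ge_max (ltW (softmax_gt0 th a)) /=.
have K_gt0 : 0 < K%:R :> R by rewrite ltr0n (leq_ltn_trans (leq0n a)) ?ltn_ord.
rewrite ler_pdivrMl //.
have grad_ge := le_trans (gradPhi_argmax_ge eta _ th _ r_le) (coord_le_norm2 _ a).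
have := ler_wpM2l (ltW eta_gt0) grad_ge; rewrite mulrA mulfV ?gt_eqF // mul1r.
lra.
Qed.

End Softmax.

Theorem lemma5p3 (R : realType) (K : nat) (hK : (0 < K)%N)
  (r : 'I_K -> R) (astar : 'I_K) (hstar : forall a : 'I_K, r a <= r astar)
  (eta alpha : R) (heta : 0 < eta)
  (A : nat -> 'I_K) (Rew : nat -> R) (t : nat) :
  Num.max 0 (K%:R^-1 * (1 - eta * norm2 (gradPhi eta r (lbsgb alpha eta A Rew t))))
    <= softmax (lbsgb alpha eta A Rew t) astar.
Proof. exact: softmax_argmax_ge. Qed.
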